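(* **Setting.** For $j=1,\dots,J$, let: - $P_{j-1}$ be an $n\times r_{j-1}$ basis matrix; - $P_{j,\mathrm{new}}$ an $n\times c_{j,\mathrm{new}}$ basis matrix with $P_{j,\mathrm{new}}'P_{j-1}=0$; - $\hat P_{j-1}$ an $n\times r_{j-1}$ basis matrix; - $\hat P_{j,\mathrm{new},k}$ ($k=1,\dots,K$) an $n\times c_{j,\mathrm{new}}$ basis matrix with $\hat P_{j,\mathrm{new},k}'\hat P_{j-1}=0$. **Quantities.** - $\kappa_{s,*}:=\max_j\kappa_s(P_{j-1})$ and $\kappa_{s,\mathrm{new}}:=\max_j\kappa_s(P_{j,\mathrm{new}})$. - $\tilde\kappa_{s,k}:=\max_j\kappa_s\big((I-P_{j,\mathrm{new}}P_{j,\mathrm{new}}')\hat P_{j,\mathrm{new},k}\big)$. Fix $j$ and $k$, and write $P_*:=P_{j-1}$, $\hat P_*:=\hat P_{j-1}$, $P_{\mathrm{new}}:=P_{j,\mathrm{new}}$ and $\hat P_{\mathrm{new},k}:=\hat P_{j,\mathrm{new},k}$. Define - $\zeta_*:=\|(I-\hat P_*\hat P_*')P_*\|_2$; - $\zeta_k:=\|(I-\hat P_*\hat P_*'-\hat P_{\mathrm{new},k}\hat P_{\mathrm{new},k}')P_{\mathrm{new}}\|_2$; - $\Phi_0:=I-\hat P_*\hat P_*'$ and $\Phi_k:=I-\hat P_*\hat P_*'-\hat P_{\mathrm{new},k}\hat P_{\mathrm{new},k}'$. **Claims.** The following hold. 1. If a basis matrix $P$ can be split as $P=[P_1,P_2]$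 with $P_1,P_2$ basis matrices, then $\kappa_s^2(P)=\max_{|T|\le s}\|I_T'P\|_2^2\le\kappa_s^2(P_1)+\kappa_s^2(P_2)$. 2. $\kappa_s^2(\hat P_* )\le\kappa_{s,*}^2+2\zeta_*$. 3. $\kappa_s(\hat P_{\mathrm{new},k})\le\kappa_{s,\mathrm{new}}+\tilde\kappa_{s,k}\zeta_k+\zeta_*$. 4. $\delta_s(\Phi_0)=\kappa_s^2(\hat P_* )\le\kappa_{s,*}^2+2\zeta_*$. 5. For $k\ge1$, $\delta_s(\Phi_k)=\kappa_s^2([\hat P_*\ \hat P_{\mathrm{new},k}])\le\kappa_s^2(\hat P_* )+\kappa_s^2(\hat P_{\mathrm{new},k})\le\kappa_{s,*}^2+2\zeta_*+(\kappa_{s,\mathrm{new}}+\tilde\kappa_{s,k}\zeta_k+\zeta_* )^2$.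
   Context: A basis matrix is a real matrix $P$ with $P'P=I$. $\mathrm{basis}(B)$ is a basis matrix with the same column span as $B$. $I_T$ is the submatrix of the $n\times n$ identity with columns in $T\subseteq\{1,\dots,n\}$, and $\Psi_T:=\Psi I_T$. The denseness coefficient is $\kappa_s(B):=\max_{|T|\le s}\|I_T'\mathrm{basis}(B)\|_2$. The $s$-restricted isometry constant $\delta_s(\Psi)$ is the smallest $\delta$ with $(1-\delta)\|x\|_2^2\le\|\Psi_Tx\|_2^2\le(1+\delta)\|x\|_2^2$ for all $|T|\le s$ and all $x$. *)

From HB Require Import structures.
From mathcomp Require Import all_boot all_order all_algebra.
From mathcomp Require Import classical_sets reals.
Set Implicit Arguments. Unset Strict Implicit. Unset Printing Implicit Defensive.
Import Order.TTheory GRing.Theory Num.Theory.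
Local Open Scope ring_scope.
Local Open Scope classical_set_scope.

Section Defs.
Variable R : realType.

Definition vnorm (m : nat) (x : 'cV[R]_m) : R := Num.sqrt (\sum_i x i 0 ^+ 2).

Definition opnorm (p q : nat) (A : 'M[R]_(p, q)) : R :=
  sup [set vnorm (A *m x) | x in [set x : 'cV[R]_q | vnorm x = 1]].

Definition basis_matrix (p q : nat) (P : 'M[R]_(p, q)) : Prop := P^T *m P = 1%:M.

Definition basis_of (p q m : nat) (P : 'M[R]_(p, m)) (B : 'M[R]_(p, q)) : Prop :=
  basis_matrix P /\ (P^T == B^T)%MS.

Definition I_T (n : nat) (T : {set 'I_n}) : 'M[R]_(n, #|T|) :=
  \matrix_(i < n, j < #|T|) (i == enum_val j)%:R.

Definition kappa_of (s n m : nat) (P : 'M[R]_(n, m)) : R :=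
  \big[Num.max/0]_(T : {set 'I_n} | (#|T| <= s)%N) opnorm ((I_T T)^T *m P).

(* denseness coefficient kappa_s(B) := max_{|T|<=s} ||I_T' basis(B)||_2.
   basis(B) is any basis matrix (with \rank B columns) of the column span of B;
   the value does not depend on the choice, so we take the sup over all choices. *)
Definition kappa (s n m : nat) (B : 'M[R]_(n, m)) : R :=
  sup [set kappa_of s P | P in [set P : 'M[R]_(n, \rank B) | basis_of P B]].

Definition delta (s n m : nat) (Psi : 'M[R]_(m, n)) : R :=
  inf [set d : R | forall T : {set 'I_n}, (#|T| <= s)%N ->
         forall x : 'cV[R]_#|T|,
           (1 - d) * vnorm x ^+ 2 <= vnorm ((Psi *m I_T T) *m x) ^+ 2 /\
           vnorm ((Psi *m I_T T) *m x) ^+ 2 <= (1 + d) * vnorm x ^+ 2].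

End Defs.

From Pilot Require Import Defs.
From HB Require Import structures.
From mathcomp Require Import all_boot all_order all_algebra.
From mathcomp Require Import boolp classical_sets reals.
From mathcomp Require Import ring lra.
Set Implicit Arguments. Unset Strict Implicit. Unset Printing Implicit Defensive.
Import Order.TTheory GRing.Theory Num.Theory.
Local Open Scope ring_scope.

(* For a basis matrix [W], [|(I - W W') I_T x|^2 = |x|^2 - |(I_T' W)' x|^2], so the
   restricted isometry constant of [I - W W'] is exactly [kappa_s(W)^2]; with
   [W = [P^_* P^_new,k]] this gives claims 4 and 5, and claim 1 is
   [|[A B]|^2 <= |A|^2 + |B|^2] applied to [I_T' [P1 P2]].
   The perturbation bounds rest on the symmetry [|(I - P P') Q| = |(I - Q Q') P|] for
   bases of equal dimension. Claim 2 follows from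
   [H H' - P P' = H H' (I - P P') - (I - H H') P P'], both terms having norm at most
   [zeta_*]. For claim 3 split [P^_new = P_new P_new' P^_new + (I - P_new P_new') P^_new]:
   the first part contributes [kappa_s(P_new)], the second at most
   [kappa~ |(I - P^_new P^_new') P_new|], and since [P_new' P_* = 0] that norm is at most
   [zeta_k + zeta_*]; finally [kappa~ <= 1]. *)

Section EuclideanNorm.
Variable R : realType.

Definition vdot m (u v : 'cV[R]_m) : R := (u^T *m v) 0 0.
Definition vnorm2 m (v : 'cV[R]_m) : R := vdot v v.

Lemma vdotE m (u v : 'cV[R]_m) : vdot u v = \sum_i u i 0 * v i 0.
Proof. by rewrite /vdot mxE; apply: eq_bigr => i _; rewrite mxE. Qed.

Lemma vnorm2E m (v : 'cV[R]_m) : vnorm2 v = \sum_i v i 0 ^+ 2.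
Proof. by rewrite /vnorm2 vdotE; apply: eq_bigr => i _; rewrite expr2. Qed.

Lemma vnorm2_ge0 m (v : 'cV[R]_m) : 0 <= vnorm2 v.
Proof. by rewrite vnorm2E; apply: sumr_ge0 => i _; exact: sqr_ge0. Qed.

Lemma vnorm2_eq0 m (v : 'cV[R]_m) : vnorm2 v = 0 -> v = 0.
Proof.
rewrite vnorm2E => /psumr_eq0P v0; apply/matrixP => i j; rewrite (ord1 j) mxE.
by apply/eqP; rewrite -sqrf_eq0; apply/eqP; apply: v0 => // k _; exact: sqr_ge0.
Qed.

Lemma vnorm2_gt0 m (v : 'cV[R]_m) : v != 0 -> 0 < vnorm2 v.
Proof.
move=> vn0; rewrite lt_def vnorm2_ge0 andbT.
by apply/eqP => /vnorm2_eq0 v0; rewrite v0 eqxx in vn0.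
Qed.

Lemma vnormE m (v : 'cV[R]_m) : vnorm v = Num.sqrt (vnorm2 v).
Proof. by rewrite /vnorm vnorm2E. Qed.

Lemma sqr_vnorm m (v : 'cV[R]_m) : vnorm v ^+ 2 = vnorm2 v.
Proof. by rewrite vnormE sqr_sqrtr // vnorm2_ge0. Qed.

Lemma vnorm_ge0 m (v : 'cV[R]_m) : 0 <= vnorm v.
Proof. by rewrite vnormE sqrtr_ge0. Qed.

Lemma vnorm_eq0 m (v : 'cV[R]_m) : vnorm v = 0 -> v = 0.
Proof. by move=> v0; apply: vnorm2_eq0; rewrite -sqr_vnorm v0 expr0n. Qed.

Lemma vnorm_le m k (u : 'cV[R]_m) (v : 'cV[R]_k) :
  vnorm2 u <= vnorm2 v -> vnorm u <= vnorm v.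
Proof. by move=> uv; rewrite !vnormE ler_sqrt ?vnorm2_ge0. Qed.

Lemma vdotC m (u v : 'cV[R]_m) : vdot u v = vdot v u.
Proof. by rewrite !vdotE; apply: eq_bigr => i _; rewrite mulrC. Qed.

Lemma vdotDr m (u v w : 'cV[R]_m) : vdot u (v + w) = vdot u v + vdot u w.
Proof. by rewrite /vdot mulmxDr mxE. Qed.

Lemma vdotZr m a (u v : 'cV[R]_m) : vdot u (a *: v) = a * vdot u v.
Proof. by rewrite /vdot -scalemxAr mxE. Qed.

Lemma vdotBr m (u v w : 'cV[R]_m) : vdot u (v - w) = vdot u v - vdot u w.
Proof. by rewrite vdotDr -scaleN1r vdotZr mulN1r. Qed.

Lemma vdotDl m (u v w : 'cV[R]_m) : vdot (v + w) u = vdot v u + vdot w u.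
Proof. by rewrite vdotC vdotDr !(vdotC u). Qed.

Lemma vdotZl m a (u v : 'cV[R]_m) : vdot (a *: v) u = a * vdot v u.
Proof. by rewrite vdotC vdotZr vdotC. Qed.

Lemma vdotBl m (u v w : 'cV[R]_m) : vdot (v - w) u = vdot v u - vdot w u.
Proof. by rewrite vdotC vdotBr !(vdotC u). Qed.

Lemma vdot0r m (u : 'cV[R]_m) : vdot u 0 = 0.
Proof. by rewrite /vdot mulmx0 mxE. Qed.

Lemma vdot_mulmx p q (M : 'M[R]_(p, q)) u v : vdot u (M *m v) = vdot (M^T *m u) v.
Proof. by rewrite /vdot trmx_mul trmxK mulmxA. Qed.

Lemma vnorm2_0 m : vnorm2 (0 : 'cV[R]_m) = 0.
Proof. exact: vdot0r. Qed.

Lemma vnorm2Z m a (v : 'cV[R]_m) : vnorm2 (a *: v) = a ^+ 2 * vnorm2 v.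
Proof. by rewrite /vnorm2 vdotZl vdotZr mulrA expr2. Qed.

Lemma vnormZ m a (v : 'cV[R]_m) : vnorm (a *: v) = `|a| * vnorm v.
Proof. by rewrite !vnormE vnorm2Z sqrtrM ?sqr_ge0 // sqrtr_sqr. Qed.

Lemma vnorm0 m : vnorm (0 : 'cV[R]_m) = 0.
Proof. by rewrite vnormE vnorm2_0 sqrtr0. Qed.

Lemma vnorm_dim0 m (v : 'cV[R]_m) : m = 0%N -> vnorm v = 0.
Proof.
by move=> m0; rewrite vnormE vnorm2E big1 ?sqrtr0 // => -[i i_lt]; exfalso; rewrite m0 in i_lt.
Qed.

Lemma vnorm2_col_mx m1 m2 (u : 'cV[R]_m1) (v : 'cV[R]_m2) :
  vnorm2 (col_mx u v) = vnorm2 u + vnorm2 v.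
Proof. by rewrite /vnorm2 /vdot tr_col_mx mul_row_col mxE. Qed.

Lemma sqr_vdot_le m (u v : 'cV[R]_m) : vdot u v ^+ 2 <= vnorm2 u * vnorm2 v.
Proof.
have := vnorm2_ge0 (vnorm2 v *: u - vdot u v *: v).
have -> : vnorm2 (vnorm2 v *: u - vdot u v *: v) =
          vnorm2 v * (vnorm2 v * vnorm2 u - vdot u v ^+ 2).
  by rewrite /vnorm2 !(vdotBl, vdotBr, vdotZl, vdotZr) [vdot v u]vdotC; ring.
have [v0|vn0] := eqVneq v 0; first by rewrite v0 vdot0r vnorm2_0 expr0n mulr0.
by rewrite pmulr_rge0 ?vnorm2_gt0 // mulrC subr_ge0.
Qed.

Lemma norm_vdot_le m (u v : 'cV[R]_m) : `|vdot u v| <= vnorm u * vnorm v.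
Proof.
rewrite -sqrtr_sqr !vnormE -sqrtrM ?vnorm2_ge0 //.
by rewrite ler_sqrt ?sqr_vdot_le // mulr_ge0 ?vnorm2_ge0.
Qed.

Lemma vnormD m (u v : 'cV[R]_m) : vnorm (u + v) <= vnorm u + vnorm v.
Proof.
rewrite -[vnorm u + vnorm v]ger0_norm ?addr_ge0 ?vnorm_ge0 // -sqrtr_sqr vnormE.
rewrite ler_sqrt ?sqr_ge0 // sqrrD !sqr_vnorm /vnorm2 !(vdotDl, vdotDr) [vdot v u]vdotC.
have := le_trans (ler_norm _) (norm_vdot_le u v); lra.
Qed.

Definition frobenius2 p q (M : 'M[R]_(p, q)) := \sum_i \sum_j M i j ^+ 2.

Lemma frobenius2_ge0 p q (M : 'M[R]_(p, q)) : 0 <= frobenius2 M.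
Proof. by apply: sumr_ge0 => i _; apply: sumr_ge0 => j _; exact: sqr_ge0. Qed.

Lemma vnorm2_mulmx_le_frobenius2 p q (M : 'M[R]_(p, q)) x :
  vnorm2 (M *m x) <= frobenius2 M * vnorm2 x.
Proof.
rewrite vnorm2E /frobenius2 mulr_suml; apply: ler_sum => i _.
pose w : 'cV[R]_q := \col_j M i j.
have -> : (M *m x) i 0 = vdot w x by rewrite vdotE mxE; apply: eq_bigr => j _; rewrite mxE.
have -> : \sum_j M i j ^+ 2 = vnorm2 w by rewrite vnorm2E; apply: eq_bigr => j _; rewrite mxE.
exact: sqr_vdot_le.
Qed.

End EuclideanNorm.

Section OperatorNorm.
Variable R : realType.
Local Open Scope classical_set_scope.

Local Notation unit_images A :=
  [set vnorm (A *m x) | x in [set x | vnorm x = 1]].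

Lemma unit_images_ubound p q (A : 'M[R]_(p, q)) : has_ubound (unit_images A).
Proof.
exists (Num.sqrt (frobenius2 A)) => _ [x /= x1 <-].
rewrite vnormE ler_sqrt ?frobenius2_ge0 //.
by have := vnorm2_mulmx_le_frobenius2 A x; rewrite -(sqr_vnorm x) x1 expr1n mulr1.
Qed.

Lemma opnorm_ge0 p q (A : 'M[R]_(p, q)) : 0 <= opnorm A.
Proof.
rewrite /opnorm; have [->|/set0P [y Ay]] := eqVneq (unit_images A) set0.
  by rewrite sup0.
apply: le_trans (ub_le_sup (unit_images_ubound A) Ay).
by case: Ay => x _ <-; exact: vnorm_ge0.
Qed.

Lemma vnorm_mulmx_le p q (A : 'M[R]_(p, q)) x :
  vnorm (A *m x) <= opnorm A * vnorm x.
Proof.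
have [x0|xn0] := eqVneq (vnorm x) 0.
  by rewrite (vnorm_eq0 x0) mulmx0 !vnorm0 mulr0.
have xp : 0 < vnorm x by rewrite lt_def xn0 vnorm_ge0.
have ixp : 0 <= (vnorm x)^-1 by rewrite invr_ge0 ltW.
have : unit_images A (vnorm (A *m ((vnorm x)^-1 *: x))).
  by exists ((vnorm x)^-1 *: x) => //=; rewrite vnormZ ger0_norm // mulVf.
move/(ub_le_sup (unit_images_ubound A)).
by rewrite -scalemxAr vnormZ ger0_norm // ler_pdivrMl // mulrC.
Qed.

Lemma opnorm_le p q (A : 'M[R]_(p, q)) c : 0 <= c ->
  (forall x, vnorm (A *m x) <= c * vnorm x) -> opnorm A <= c.
Proof.
move=> c0 Ac; rewrite /opnorm.
have [->|ne] := eqVneq (unit_images A) set0; first by rewrite sup0.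
by apply: ge_sup; [exact/set0P | move=> _ [x /= x1 <-]; rewrite -[c]mulr1 -x1].
Qed.

Lemma vnorm2_mulmx_le p q (A : 'M[R]_(p, q)) x :
  vnorm2 (A *m x) <= opnorm A ^+ 2 * vnorm2 x.
Proof.
rewrite -!sqr_vnorm -exprMn ler_sqr ?nnegrE ?mulr_ge0 ?vnorm_ge0 ?opnorm_ge0 //.
exact: vnorm_mulmx_le.
Qed.

Lemma sqr_opnorm_le p q (A : 'M[R]_(p, q)) c : 0 <= c ->
  (forall x, vnorm2 (A *m x) <= c * vnorm2 x) -> opnorm A ^+ 2 <= c.
Proof.
move=> c0 Ac; rewrite -(sqr_sqrtr c0) ler_sqr ?nnegrE ?opnorm_ge0 ?sqrtr_ge0 //.
apply: opnorm_le; first exact: sqrtr_ge0.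
by move=> x; rewrite !vnormE -sqrtrM // ler_sqrt ?mulr_ge0 ?vnorm2_ge0.
Qed.

(* From [|M^T w|^2 = <w, M M^T w> <= |w| |M M^T w|] and the bound on [M]. *)
Lemma vnorm2_trmx_mulmx_le p q (M : 'M[R]_(p, q)) c : 0 <= c ->
  (forall z, vnorm2 (M *m z) <= c * vnorm2 z) ->
  forall w, vnorm2 (M^T *m w) <= c * vnorm2 w.
Proof.
move=> c0 Mc w; set y := M^T *m w.
have [y0|yn0] := eqVneq y 0; first by rewrite y0 vnorm2_0 mulr_ge0 ?vnorm2_ge0.
have yp := vnorm2_gt0 yn0.
have CS : vnorm2 y ^+ 2 <= vnorm2 w * vnorm2 (M *m y).
  by rewrite {1}/vnorm2 {1}/y -vdot_mulmx sqr_vdot_le.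
have : vnorm2 y * vnorm2 y <= vnorm2 y * (c * vnorm2 w).
  rewrite -expr2 (le_trans CS) //.
  have -> : vnorm2 y * (c * vnorm2 w) = vnorm2 w * (c * vnorm2 y) by ring.
  by rewrite ler_wpM2l ?vnorm2_ge0.
by rewrite ler_pM2l.
Qed.

Lemma opnorm_trmx p q (M : 'M[R]_(p, q)) : opnorm M^T = opnorm M.
Proof.
suff le_tr : forall r s (N : 'M[R]_(r, s)), opnorm N^T <= opnorm N.
  by apply/eqP; rewrite eq_le le_tr /= -{1}(trmxK M) le_tr.
move=> r s N; rewrite -ler_sqr ?nnegrE ?opnorm_ge0 //.
apply: sqr_opnorm_le; first exact: sqr_ge0.
by apply: vnorm2_trmx_mulmx_le; [exact: sqr_ge0 | exact: vnorm2_mulmx_le].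
Qed.

Lemma opnorm_mulmx_le p q r (A : 'M[R]_(p, q)) (B : 'M[R]_(q, r)) :
  opnorm (A *m B) <= opnorm A * opnorm B.
Proof.
apply: opnorm_le => [|x]; first by rewrite mulr_ge0 ?opnorm_ge0.
rewrite -mulmxA (le_trans (vnorm_mulmx_le A _)) // -mulrA.
by rewrite ler_wpM2l ?opnorm_ge0 ?vnorm_mulmx_le.
Qed.

Lemma opnorm_addmx_le p q (A B : 'M[R]_(p, q)) :
  opnorm (A + B) <= opnorm A + opnorm B.
Proof.
apply: opnorm_le => [|x]; first by rewrite addr_ge0 ?opnorm_ge0.
by rewrite mulmxDl mulrDl (le_trans (vnormD _ _)) // lerD ?vnorm_mulmx_le.
Qed.

Lemma sqr_opnorm_row_mx_le p a b (A : 'M[R]_(p, a)) (B : 'M[R]_(p, b)) :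
  opnorm (row_mx A B) ^+ 2 <= opnorm A ^+ 2 + opnorm B ^+ 2.
Proof.
apply: sqr_opnorm_le => [|x]; first by rewrite addr_ge0 ?sqr_ge0.
rewrite -[x]vsubmxK mul_row_col vnorm2_col_mx -!sqr_vnorm.
set x1 := usubmx x; set x2 := dsubmx x.
have ABx : vnorm (A *m x1 + B *m x2) <= opnorm A * vnorm x1 + opnorm B * vnorm x2.
  exact: le_trans (vnormD _ _) (lerD (vnorm_mulmx_le _ _) (vnorm_mulmx_le _ _)).
have CS : (opnorm A * vnorm x1 + opnorm B * vnorm x2) ^+ 2
          <= (opnorm A ^+ 2 + opnorm B ^+ 2) * (vnorm x1 ^+ 2 + vnorm x2 ^+ 2).
  have := sqr_ge0 (opnorm A * vnorm x2 - opnorm B * vnorm x1); nra.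
apply: le_trans CS; rewrite ler_sqr ?nnegrE ?vnorm_ge0 //.
by rewrite addr_ge0 ?mulr_ge0 ?opnorm_ge0 ?vnorm_ge0.
Qed.

Lemma opnorm_nrow0 p q (A : 'M[R]_(p, q)) : p = 0%N -> opnorm A = 0.
Proof.
move=> p0; apply/eqP; rewrite eq_le opnorm_ge0 andbT.
by apply: opnorm_le => // x; rewrite vnorm_dim0 // mul0r.
Qed.

Lemma norm_vdot_mulmx_le p q (u : 'cV[R]_p) (M : 'M[R]_(p, q)) v :
  `|vdot u (M *m v)| <= opnorm M * (vnorm u * vnorm v).
Proof.
apply: le_trans (norm_vdot_le _ _) _; rewrite mulrCA ler_wpM2l ?vnorm_ge0 //.
exact: vnorm_mulmx_le.
Qed.

End OperatorNorm.

Section BasisMatrices.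
Variable R : realType.

Lemma basis_matrix_I_T n (T : {set 'I_n}) : basis_matrix (I_T R T).
Proof.
apply/matrixP => j k; rewrite mxE [RHS]mxE; under eq_bigr do rewrite !mxE.
rewrite (bigD1 (enum_val j)) //= eqxx mul1r big1 ?addr0; last first.
  by move=> i /negbTE ->; rewrite mul0r.
by rewrite (inj_eq enum_val_inj).
Qed.

Lemma basis_matrix_row_mx n r c (H : 'M[R]_(n, r)) (Q : 'M[R]_(n, c)) :
  basis_matrix H -> basis_matrix Q -> Q^T *m H = 0 -> basis_matrix (row_mx H Q).
Proof.
move=> hH hQ QH; rewrite /basis_matrix tr_row_mx mul_col_row hH hQ QH.
have -> : H^T *m Q = 0 by rewrite -(trmxK (H^T *m Q)) trmx_mul trmxK QH trmx0.
by rewrite -scalar_mx_block.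
Qed.

Lemma vnorm2_basis_mulmx n m (P : 'M[R]_(n, m)) x :
  basis_matrix P -> vnorm2 (P *m x) = vnorm2 x.
Proof. by move=> hP; rewrite /vnorm2 vdot_mulmx mulmxA hP mul1mx. Qed.

Lemma trmx_compl_proj n m (P : 'M[R]_(n, m)) :
  (1%:M - P *m P^T)^T = 1%:M - P *m P^T.
Proof. by rewrite linearB /= trmx1 trmx_mul trmxK. Qed.

Lemma vnorm2_compl_proj n m (P : 'M[R]_(n, m)) v : basis_matrix P ->
  vnorm2 ((1%:M - P *m P^T) *m v) = vnorm2 v - vnorm2 (P^T *m v).
Proof.
move=> hP; rewrite mulmxBl mul1mx -mulmxA.
have cross : vdot v (P *m (P^T *m v)) = vnorm2 (P^T *m v) by rewrite vdot_mulmx.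
have := vnorm2_basis_mulmx (P^T *m v) hP; rewrite /vnorm2 in cross * => proj.
by rewrite !(vdotBl, vdotBr) [vdot (P *m _) v]vdotC cross proj; ring.
Qed.

Lemma vnorm2_trmx_basis_le n m (P : 'M[R]_(n, m)) v : basis_matrix P ->
  vnorm2 (P^T *m v) <= vnorm2 v.
Proof.
by move=> hP; rewrite -subr_ge0 -vnorm2_compl_proj // vnorm2_ge0.
Qed.

Lemma vnorm_trmx_basis_le n m (P : 'M[R]_(n, m)) v : basis_matrix P ->
  vnorm (P^T *m v) <= vnorm v.
Proof. by move=> hP; rewrite vnorm_le ?vnorm2_trmx_basis_le. Qed.

Lemma opnorm_trmx_basis_le1 n m (P : 'M[R]_(n, m)) : basis_matrix P -> opnorm P^T <= 1.
Proof.
move=> hP; rewrite -(ler_sqr (opnorm_ge0 _)) ?nnegrE // expr1n.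
by apply: sqr_opnorm_le => // x; rewrite mul1r vnorm2_trmx_basis_le.
Qed.

Lemma opnorm_basis_le1 n m (P : 'M[R]_(n, m)) : basis_matrix P -> opnorm P <= 1.
Proof. by move=> hP; rewrite -opnorm_trmx opnorm_trmx_basis_le1. Qed.

Lemma basis_proj_id n m k (P : 'M[R]_(n, m)) (Q : 'M[R]_(n, k)) : basis_matrix P ->
  (Q^T <= P^T)%MS -> Q = P *m (P^T *m Q).
Proof.
move=> hP /submxP [D QD].
have -> : Q = P *m D^T by rewrite -(trmxK Q) QD trmx_mul trmxK.
by rewrite [P^T *m _]mulmxA hP mul1mx.
Qed.

(* [A] is invertible since [A^T] is bounded below; then bound [A^-T] from above and transpose. *)
Lemma trmx_lower_bound r (A : 'M[R]_r) t :
  (forall y, t * vnorm2 y <= vnorm2 (A^T *m y)) ->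
  forall x, t * vnorm2 x <= vnorm2 (A *m x).
Proof.
move=> AtT x; have [t_le0|t_gt0] := leP t 0.
  by apply: le_trans (vnorm2_ge0 _); rewrite mulr_le0_ge0 ?vnorm2_ge0.
have At_inj (y : 'cV[R]_r) : A^T *m y = 0 -> y = 0.
  move=> Aty0; apply: vnorm2_eq0; apply/eqP; rewrite eq_le vnorm2_ge0 andbT.
  by have := AtT y; rewrite Aty0 vnorm2_0 pmulr_rle0.
have Au : A \in unitmx.
  rewrite unitmxE unitfE; apply/negP => /det0P [v vn0 vA].
  suff : v^T = 0 by move/eqP; rewrite trmx_eq0 (negbTE vn0).
  by apply: At_inj; rewrite -trmx_mul vA trmx0.
have Atu : A^T \in unitmx by rewrite unitmx_tr.
have Binv z : vnorm2 (invmx A^T *m z) <= t^-1 * vnorm2 z.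
  by rewrite ler_pdivlMl // (le_trans (AtT _)) // mulmxA mulmxV // mul1mx.
have tV_ge0 : 0 <= t^-1 by rewrite invr_ge0 ltW.
have := vnorm2_trmx_mulmx_le tV_ge0 Binv (A *m x).
by rewrite trmx_inv trmxK mulmxA mulVmx // mul1mx ler_pdivlMl.
Qed.

(* Via [|(I - Y Y') X x|^2 = |x|^2 - |Y' X x|^2], both sides measure the smallest singular
   value of the square matrices [Y' X] and [X' Y], which are transposes of each other. *)
Lemma sin_theta_sym n r (P Q : 'M[R]_(n, r)) : basis_matrix P -> basis_matrix Q ->
  opnorm ((1%:M - P *m P^T) *m Q) = opnorm ((1%:M - Q *m Q^T) *m P).
Proof.
suff le_sin : forall X Y : 'M[R]_(n, r), basis_matrix X -> basis_matrix Y ->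
    opnorm ((1%:M - X *m X^T) *m Y) <= opnorm ((1%:M - Y *m Y^T) *m X).
  by move=> hP hQ; apply/eqP; rewrite eq_le !le_sin.
move=> X Y hX hY; set z := opnorm ((1%:M - Y *m Y^T) *m X).
have lower y : (1 - z ^+ 2) * vnorm2 y <= vnorm2 ((X^T *m Y)^T *m y).
  have := vnorm2_mulmx_le ((1%:M - Y *m Y^T) *m X) y.
  rewrite -mulmxA vnorm2_compl_proj // (vnorm2_basis_mulmx y hX) trmx_mul trmxK mulmxA.
  rewrite -/z; lra.
rewrite -(ler_sqr (opnorm_ge0 _) (opnorm_ge0 _)).
apply: sqr_opnorm_le => [|x]; first exact: sqr_ge0.
have := trmx_lower_bound lower x.
rewrite -!mulmxA vnorm2_compl_proj // (vnorm2_basis_mulmx x hY) -/z; lra.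
Qed.

End BasisMatrices.

Section GramSchmidt.
Variable R : realType.

Lemma col_mx_subl m1 m2 n (A : 'M[R]_(m1, n)) (B : 'M[R]_(m2, n)) :
  (A <= col_mx A B)%MS.
Proof. by rewrite -addsmxE addsmxSl. Qed.

Lemma col_mx_subr m1 m2 n (A : 'M[R]_(m1, n)) (B : 'M[R]_(m2, n)) :
  (B <= col_mx A B)%MS.
Proof. by rewrite -addsmxE addsmxSr. Qed.

(* One Gram-Schmidt step: normalise the residual of the new row [a] against [Q]. *)
Lemma orthonormal_rows_cons k m n (a : 'M[R]_(1, n)) (Q : 'M[R]_(k, n)) (A : 'M[R]_(m, n)) :
  Q *m Q^T = 1%:M -> (Q == A)%MS ->
  exists k' (Q' : 'M[R]_(k', n)), Q' *m Q'^T = 1%:M /\ (Q' == col_mx a A)%MS.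
Proof.
move=> QQt /andP [QA AQ].
have QaA : (Q <= col_mx a A)%MS := submx_trans QA (col_mx_subr _ _).
pose v := a - a *m Q^T *m Q.
have [v0|vn0] := eqVneq v 0.
  exists k, Q; split => //; rewrite QaA col_mx_sub AQ andbT.
  have -> : a = a *m Q^T *m Q by apply/eqP; rewrite -subr_eq0 -/v v0.
  exact: submxMl.
have vp : 0 < vnorm2 v^T by rewrite vnorm2_gt0 // trmx_eq0.
pose q := (Num.sqrt (vnorm2 v^T))^-1 *: v.
have Qvt : Q *m v^T = 0.
  by rewrite /v linearB /= !trmx_mul !trmxK mulmxBr !mulmxA QQt mul1mx subrr.
have vQt : v *m Q^T = 0 by rewrite -(trmxK (v *m Q^T)) trmx_mul trmxK Qvt trmx0.
have qqt : q *m q^T = 1%:M.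
  apply/matrixP => i j; rewrite !ord1 /q linearZ /= -scalemxAr -scalemxAl scalerA.
  rewrite [LHS]mxE [RHS]mxE eqxx mulr1n -expr2 exprVn sqr_sqrtr ?ltW //.
  by rewrite [(v *m v^T) 0 0](_ : _ = vnorm2 v^T) ?mulVf ?gt_eqF // /vnorm2 /vdot trmxK.
exists (k + 1)%N, (col_mx Q q); split.
  rewrite tr_col_mx mul_col_row QQt qqt /q linearZ /= -scalemxAr -scalemxAl.
  by rewrite Qvt vQt !scaler0 -scalar_mx_block.
have v_sub : (v <= col_mx a A)%MS.
  rewrite /v -scaleN1r addmx_sub ?scalemx_sub ?col_mx_subl //.
  exact: submx_trans (submxMl _ _) QaA.
apply/andP; split; first by rewrite col_mx_sub QaA scalemx_sub.
rewrite col_mx_sub (submx_trans AQ (col_mx_subl _ _)) andbT.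
have -> : a = Num.sqrt (vnorm2 v^T) *: q + a *m Q^T *m Q.
  by rewrite /q scalerA mulfV ?gt_eqF ?sqrtr_gt0 // scale1r /v subrK.
apply: addmx_sub; first exact: scalemx_sub (col_mx_subr _ _).
exact: submx_trans (submxMl _ _) (col_mx_subl _ _).
Qed.

Lemma orthonormal_rows_exist m n (A : 'M[R]_(m, n)) :
  exists k (Q : 'M[R]_(k, n)), Q *m Q^T = 1%:M /\ (Q == A)%MS.
Proof.
elim: m A => [|m IH] A.
  exists 0%N, 0; split; first by apply/matrixP => -[].
  by rewrite [A]flatmx0 !submx_refl.
have [k [Q [QQt QA]]] := IH (dsubmx (A : 'M_(1 + m, n))).
have [k' [Q' [Q'Q't Q'A]]] := orthonormal_rows_cons (usubmx (A : 'M_(1 + m, n))) QQt QA.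
by exists k', Q'; rewrite vsubmxK in Q'A.
Qed.

Lemma basis_of_exists n m (B : 'M[R]_(n, m)) :
  exists Q : 'M[R]_(n, \rank B), Defs.basis_of Q B.
Proof.
have [k [Q [QQt QB]]] := orthonormal_rows_exist B^T.
have k_rank : k = \rank B.
  rewrite -(mxrank_tr B) -(eqmx_rank QB); apply/eqP; rewrite eqn_leq rank_leq_row /=.
  by rewrite -[X in (X <= _)%N](mxrank1 R k) -QQt mxrankM_maxl.
by subst k; exists Q^T; split; rewrite /basis_matrix trmxK.
Qed.

End GramSchmidt.

Section Denseness.
Variable R : realType.
Variable s : nat.
Local Open Scope classical_set_scope.

Lemma sqr_bigmax (I : finType) (P : pred I) (F : I -> R) : (forall i, 0 <= F i) ->
  (\big[Num.max/0]_(i | P i) F i) ^+ 2 = \big[Num.max/0]_(i | P i) F i ^+ 2.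
Proof.
move=> F_ge0; suff [] : 0 <= \big[Num.max/0]_(i | P i) F i /\
    (\big[Num.max/0]_(i | P i) F i) ^+ 2 = \big[Num.max/0]_(i | P i) F i ^+ 2 by [].
elim/big_rec2: _ => [|i y y2 _ [y_ge0 <-]]; first by rewrite expr0n.
split; first by rewrite le_max y_ge0 orbT.
rewrite !maxEle ler_sqr ?nnegrE //; by case: ifP.
Qed.

Lemma kappa_of_ge0 n m (P : 'M[R]_(n, m)) : 0 <= kappa_of s P.
Proof.
rewrite /kappa_of; elim/big_ind: _ => // [x y x_ge0 y_ge0|T _]; last exact: opnorm_ge0.
by rewrite le_max x_ge0.
Qed.

Lemma opnorm_le_kappa_of n m (P : 'M[R]_(n, m)) (T : {set 'I_n}) : (#|T| <= s)%N ->
  opnorm ((I_T R T)^T *m P) <= kappa_of s P.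
Proof. by move=> Ts; apply: le_bigmax_cond. Qed.

Lemma kappa_of_le n m (P : 'M[R]_(n, m)) c : 0 <= c ->
  (forall T : {set 'I_n}, (#|T| <= s)%N -> opnorm ((I_T R T)^T *m P) <= c) ->
  kappa_of s P <= c.
Proof. exact: bigmax_le. Qed.

Lemma sqr_kappa_of n m (P : 'M[R]_(n, m)) :
  kappa_of s P ^+ 2 = \big[Num.max/0]_(T : {set 'I_n} | (#|T| <= s)%N)
                         opnorm ((I_T R T)^T *m P) ^+ 2.
Proof. by rewrite sqr_bigmax // => T; exact: opnorm_ge0. Qed.

Lemma opnorm_mulmx_basis_le p n m k (M : 'M[R]_(p, n)) (P : 'M[R]_(n, m)) (Q : 'M[R]_(n, k)) :
  basis_matrix P -> basis_matrix Q -> (Q^T <= P^T)%MS ->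
  opnorm (M *m Q) <= opnorm (M *m P).
Proof.
move=> hP hQ QP; rewrite (basis_proj_id hP QP) mulmxA.
apply: le_trans (opnorm_mulmx_le _ _) _; rewrite -[X in _ <= X]mulr1.
rewrite ler_wpM2l ?opnorm_ge0 // (le_trans (opnorm_mulmx_le _ _)) // -[1]mulr1.
by rewrite ler_pM ?opnorm_ge0 ?opnorm_trmx_basis_le1 ?opnorm_basis_le1.
Qed.

Lemma kappa_of_eqmx n m k (P : 'M[R]_(n, m)) (Q : 'M[R]_(n, k)) :
  basis_matrix P -> basis_matrix Q -> (Q^T == P^T)%MS -> kappa_of s P = kappa_of s Q.
Proof.
move=> hP hQ /andP [QP PQ]; apply: eq_bigr => T _.
by apply/eqP; rewrite eq_le !opnorm_mulmx_basis_le.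
Qed.

(* All admissible choices of [basis(B)] give the same [kappa_of], so the sup is attained. *)
Lemma kappa_basis_of n m (B : 'M[R]_(n, m)) (Q : 'M[R]_(n, \rank B)) :
  Defs.basis_of Q B -> kappa s B = kappa_of s Q.
Proof.
move=> [hQ QB]; rewrite /kappa.
have -> : [set kappa_of s P | P in [set P : 'M[R]_(n, \rank B) | Defs.basis_of P B]]
          = [set kappa_of s Q].
  apply/seteqP; split => [_ [P [hP PB] <-]|_ ->]; last by exists Q.
  apply: kappa_of_eqmx => //.
  case/andP: PB => PB BP; case/andP: QB => QB BQ.
  by rewrite (submx_trans QB BP) (submx_trans PB BQ).
by rewrite sup1.
Qed.

Lemma kappa_basis n m (P : 'M[R]_(n, m)) : basis_matrix P -> kappa s P = kappa_of s P.
Proof.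
move=> hP; have [Q QP] := basis_of_exists P; rewrite (kappa_basis_of QP).
by case: QP => hQ QP; symmetry; apply: kappa_of_eqmx.
Qed.

Lemma kappa_ge0 n m (B : 'M[R]_(n, m)) : 0 <= kappa s B.
Proof. by have [Q QB] := basis_of_exists B; rewrite (kappa_basis_of QB) kappa_of_ge0. Qed.

Lemma opnorm_I_T_mulmx_le n m (B : 'M[R]_(n, m)) (T : {set 'I_n}) : (#|T| <= s)%N ->
  opnorm ((I_T R T)^T *m B) <= kappa s B * opnorm B.
Proof.
move=> Ts; have [Q [hQ QB]] := basis_of_exists B.
rewrite (kappa_basis_of (conj hQ QB)).
have BQ : (B^T <= Q^T)%MS by case/andP: QB.
rewrite {1}(basis_proj_id hQ BQ) mulmxA.
apply: le_trans (opnorm_mulmx_le _ _) _.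
rewrite ler_pM ?opnorm_ge0 ?opnorm_le_kappa_of //.
apply: le_trans (opnorm_mulmx_le _ _) _.
by rewrite -[X in _ <= X]mul1r ler_wpM2r ?opnorm_ge0 ?opnorm_trmx_basis_le1.
Qed.

Lemma kappa_of_le1 n m (P : 'M[R]_(n, m)) : basis_matrix P -> kappa_of s P <= 1.
Proof.
move=> hP; apply: kappa_of_le => // T _; apply: le_trans (opnorm_mulmx_le _ _) _.
rewrite -[1]mulr1 ler_pM ?opnorm_ge0 ?(opnorm_basis_le1 hP) ?opnorm_trmx_basis_le1 //.
exact: basis_matrix_I_T.
Qed.

Lemma kappa_le1 n m (B : 'M[R]_(n, m)) : kappa s B <= 1.
Proof.
have [Q [hQ QB]] := basis_of_exists B.
by rewrite (kappa_basis_of (conj hQ QB)) kappa_of_le1.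
Qed.

End Denseness.

Section RestrictedIsometry.
Variable R : realType.
Variable s : nat.
Local Open Scope classical_set_scope.

Definition rip_bound n m (Psi : 'M[R]_(m, n)) (d : R) : Prop :=
  forall T : {set 'I_n}, (#|T| <= s)%N -> forall x : 'cV[R]_#|T|,
    (1 - d) * vnorm x ^+ 2 <= vnorm ((Psi *m I_T R T) *m x) ^+ 2 /\
    vnorm ((Psi *m I_T R T) *m x) ^+ 2 <= (1 + d) * vnorm x ^+ 2.

Lemma deltaE n m (Psi : 'M[R]_(m, n)) : delta s Psi = inf [set d | rip_bound Psi d].
Proof. by []. Qed.

Variables (n m : nat) (W : 'M[R]_(n, m)).
Hypothesis hW : basis_matrix W.

Lemma sqr_vnorm_compl_proj_I_T (T : {set 'I_n}) x :
  vnorm ((1%:M - W *m W^T) *m I_T R T *m x) ^+ 2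
  = vnorm2 x - vnorm2 (((I_T R T)^T *m W)^T *m x).
Proof.
rewrite sqr_vnorm -mulmxA vnorm2_compl_proj //.
by rewrite (vnorm2_basis_mulmx x (basis_matrix_I_T R T)) trmx_mul trmxK mulmxA.
Qed.

Lemma rip_bound_compl_proj : rip_bound (1%:M - W *m W^T) (kappa_of s W ^+ 2).
Proof.
move=> T Ts x; rewrite sqr_vnorm_compl_proj_I_T sqr_vnorm.
have : vnorm2 (((I_T R T)^T *m W)^T *m x) <= kappa_of s W ^+ 2 * vnorm2 x.
  apply: le_trans (vnorm2_mulmx_le _ _) _; rewrite opnorm_trmx ler_wpM2r ?vnorm2_ge0 //.
  by rewrite ler_sqr ?nnegrE ?opnorm_ge0 ?kappa_of_ge0 ?opnorm_le_kappa_of.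
have := vnorm2_ge0 (((I_T R T)^T *m W)^T *m x); have := vnorm2_ge0 x.
split; nra.
Qed.

Lemma rip_bound_compl_proj_ge d : (exists T : {set 'I_n}, (0 < #|T| <= s)%N) ->
  rip_bound (1%:M - W *m W^T) d -> kappa_of s W ^+ 2 <= d.
Proof.
move=> [T0 /andP [T0_gt0 T0s]] dW.
have d_ge0 : 0 <= d.
  pose x : 'cV[R]_#|T0| := const_mx 1.
  have x_gt0 : 0 < vnorm2 x.
    rewrite vnorm2_gt0 //; apply/eqP => /matrixP /(_ (Ordinal T0_gt0) 0).
    by rewrite !mxE; exact/eqP/oner_neq0.
  have [+ _] := dW T0 T0s x; rewrite sqr_vnorm_compl_proj_I_T sqr_vnorm.
  have := vnorm2_ge0 (((I_T R T0)^T *m W)^T *m x); nra.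
rewrite sqr_kappa_of; apply: bigmax_le => // T Ts.
rewrite -opnorm_trmx; apply: sqr_opnorm_le => // x.
have [+ _] := dW T Ts x; rewrite sqr_vnorm_compl_proj_I_T sqr_vnorm; nra.
Qed.

Lemma delta_compl_proj : delta s (1%:M - W *m W^T) = kappa_of s W ^+ 2.
Proof.
rewrite deltaE; have W_rip := rip_bound_compl_proj.
case: (pselect (exists T : {set 'I_n}, (0 < #|T| <= s)%N)) => [nonempty|empty].
  apply/eqP; rewrite eq_le; apply/andP; split.
    apply: ge_inf W_rip; exists (kappa_of s W ^+ 2).
    by move=> d /(rip_bound_compl_proj_ge nonempty).
  by apply: lb_le_inf => [|d]; [exists (kappa_of s W ^+ 2) | exact: rip_bound_compl_proj_ge].
(* Otherwise only [T = set0] is admissible, so every [d] is a RIP bound, and [inf] of a set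
   unbounded below is 0. *)
have T0 (T : {set 'I_n}) : (#|T| <= s)%N -> #|T| = 0%N.
  move=> Ts; apply/eqP; rewrite -leqn0 leqNgt; apply/negP => T_gt0.
  by apply: empty; exists T; rewrite T_gt0.
have -> : kappa_of s W ^+ 2 = 0.
  rewrite sqr_kappa_of; elim/big_ind: _ => // [x y -> ->|T Ts]; first by rewrite maxxx.
  by rewrite opnorm_nrow0 ?expr0n // T0.
have -> : [set d | rip_bound (1%:M - W *m W^T) d] = setT.
  apply/seteqP; split => // d _ T Ts x.
  have -> : x = 0 by apply/matrixP => -[i i_lt] j; exfalso; rewrite T0 in i_lt.
  by rewrite mulmx0 !vnorm0 expr0n /= !mulr0.
by apply: inf_out => -[_ [y ylb]]; have := ylb (y - 1) I; lra.
Qed.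

End RestrictedIsometry.

Section Perturbation.
Variable R : realType.
Variable s : nat.

Lemma kappa_row_mx_le n a b (P1 : 'M[R]_(n, a)) (P2 : 'M[R]_(n, b)) :
  basis_matrix (row_mx P1 P2) -> basis_matrix P1 -> basis_matrix P2 ->
  kappa s (row_mx P1 P2) ^+ 2 <= kappa s P1 ^+ 2 + kappa s P2 ^+ 2.
Proof.
move=> hP hP1 hP2; rewrite !kappa_basis // sqr_kappa_of.
apply: bigmax_le => [|T Ts]; first by rewrite addr_ge0 ?sqr_ge0.
rewrite mul_mx_row (le_trans (sqr_opnorm_row_mx_le _ _)) // lerD //.
  by rewrite ler_sqr ?nnegrE ?opnorm_ge0 ?kappa_of_ge0 ?opnorm_le_kappa_of.
by rewrite ler_sqr ?nnegrE ?opnorm_ge0 ?kappa_of_ge0 ?opnorm_le_kappa_of.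
Qed.

Lemma vnorm2_trmx_basis_perturb_le n r (P H : 'M[R]_(n, r)) y :
  basis_matrix P -> basis_matrix H ->
  vnorm2 (H^T *m y) <= vnorm2 (P^T *m y) + 2 * opnorm ((1%:M - H *m H^T) *m P) * vnorm2 y.
Proof.
move=> hP hH; set zeta := opnorm ((1%:M - H *m H^T) *m P).
have diff : vnorm2 (H^T *m y) - vnorm2 (P^T *m y)
    = vdot (H^T *m y) ((H^T *m (1%:M - P *m P^T)) *m y)
      - vdot y (((1%:M - H *m H^T) *m P) *m (P^T *m y)).
  rewrite /vnorm2 -!vdot_mulmx -!vdotBr; congr vdot.
  by rewrite !mulmxA !(mulmxBl, mulmxBr) !mulmx1 !mul1mx !mulmxA opprB addrA subrK.
have first_term : vdot (H^T *m y) ((H^T *m (1%:M - P *m P^T)) *m y) <= zeta * vnorm2 y.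
  apply: le_trans (ler_norm _) _; apply: le_trans (norm_vdot_mulmx_le _ _ _) _.
  rewrite -(trmx_compl_proj P) -trmx_mul opnorm_trmx sin_theta_sym // -sqr_vnorm expr2.
  by rewrite ler_wpM2l ?opnorm_ge0 // ler_wpM2r ?vnorm_ge0 ?vnorm_trmx_basis_le.
have second_term : - vdot y (((1%:M - H *m H^T) *m P) *m (P^T *m y)) <= zeta * vnorm2 y.
  rewrite lerNl; apply: lerNnormlW; apply: le_trans (norm_vdot_mulmx_le _ _ _) _.
  rewrite -sqr_vnorm expr2.
  by rewrite ler_wpM2l ?opnorm_ge0 // ler_wpM2l ?vnorm_ge0 ?vnorm_trmx_basis_le.
lra.
Qed.

Lemma sqr_kappa_of_perturb_le n r (P H : 'M[R]_(n, r)) :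
  basis_matrix P -> basis_matrix H ->
  kappa_of s H ^+ 2 <= kappa_of s P ^+ 2 + 2 * opnorm ((1%:M - H *m H^T) *m P).
Proof.
move=> hP hH; set zeta := opnorm ((1%:M - H *m H^T) *m P).
have zeta_ge0 : 0 <= zeta := opnorm_ge0 _.
rewrite sqr_kappa_of; apply: bigmax_le => [|T Ts]; first by rewrite addr_ge0 ?sqr_ge0 ?mulr_ge0.
rewrite -opnorm_trmx trmx_mul trmxK.
apply: (@le_trans _ _ (opnorm (P^T *m I_T R T) ^+ 2 + 2 * zeta)).
  apply: sqr_opnorm_le => [|x]; first by rewrite addr_ge0 ?sqr_ge0 ?mulr_ge0.
  rewrite -mulmxA (le_trans (vnorm2_trmx_basis_perturb_le _ hP hH)) //.
  rewrite (vnorm2_basis_mulmx x (basis_matrix_I_T R T)) [X in _ <= X]mulrDl lerD2r mulmxA.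
  exact: vnorm2_mulmx_le.
rewrite lerD2r -opnorm_trmx trmx_mul trmxK.
by rewrite ler_sqr ?nnegrE ?opnorm_ge0 ?kappa_of_ge0 ?opnorm_le_kappa_of.
Qed.

Lemma kappa_of_basis_split_le n m k (P : 'M[R]_(n, m)) (Q : 'M[R]_(n, k)) :
  basis_matrix P -> basis_matrix Q ->
  kappa_of s Q <= kappa_of s P
    + kappa s ((1%:M - P *m P^T) *m Q) * opnorm ((1%:M - P *m P^T) *m Q).
Proof.
move=> hP hQ; apply: kappa_of_le => [|T Ts].
  by rewrite addr_ge0 ?mulr_ge0 ?kappa_of_ge0 ?kappa_ge0 ?opnorm_ge0.
have -> : (I_T R T)^T *m Q
    = (I_T R T)^T *m P *m (P^T *m Q) + (I_T R T)^T *m ((1%:M - P *m P^T) *m Q).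
  by rewrite -mulmxA -mulmxDr mulmxBl mul1mx !mulmxA addrC subrK.
apply: le_trans (opnorm_addmx_le _ _) _; apply: lerD; last exact: opnorm_I_T_mulmx_le.
apply: le_trans (opnorm_mulmx_le _ _) _; rewrite -[X in _ <= X]mulr1.
rewrite ler_pM ?opnorm_ge0 ?opnorm_le_kappa_of //.
apply: le_trans (opnorm_mulmx_le _ _) _; rewrite -[1]mulr1.
by rewrite ler_pM ?opnorm_ge0 ?opnorm_trmx_basis_le1 ?opnorm_basis_le1.
Qed.

Lemma opnorm_compl_new_le n r c (Ps H : 'M[R]_(n, r)) (P Q : 'M[R]_(n, c)) :
  basis_matrix Ps -> basis_matrix H -> basis_matrix P -> basis_matrix Q ->
  P^T *m Ps = 0 ->
  opnorm ((1%:M - P *m P^T) *m Q)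
    <= opnorm ((1%:M - H *m H^T - Q *m Q^T) *m P) + opnorm ((1%:M - H *m H^T) *m Ps).
Proof.
move=> hPs hH hP hQ PPs; rewrite sin_theta_sym //.
have PsP : Ps^T *m P = 0 by rewrite -(trmxK (Ps^T *m P)) trmx_mul trmxK PPs trmx0.
have -> : (1%:M - Q *m Q^T) *m P = (1%:M - H *m H^T - Q *m Q^T) *m P
    + H *m (H^T *m (1%:M - Ps *m Ps^T)) *m P.
  rewrite -(mulmxA H) -(mulmxA _ _ P) [(1%:M - Ps *m _) *m P]mulmxBl mul1mx.
  rewrite -(mulmxA Ps) PsP.
  by rewrite mulmx0 subr0 mulmxA -mulmxDl addrAC subrK.
apply: le_trans (opnorm_addmx_le _ _) _; rewrite lerD2l -mulmxA.
apply: le_trans (opnorm_mulmx_le _ _) _; rewrite -[X in _ <= X]mul1r.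
rewrite ler_pM ?opnorm_ge0 ?opnorm_basis_le1 //.
apply: le_trans (opnorm_mulmx_le _ _) _; rewrite -[X in _ <= X]mulr1.
rewrite ler_pM ?opnorm_ge0 ?opnorm_basis_le1 //.
by rewrite -(trmx_compl_proj Ps) -trmx_mul opnorm_trmx sin_theta_sym.
Qed.

Lemma kappa_of_new_perturb_le n r c (Ps H : 'M[R]_(n, r)) (P Q : 'M[R]_(n, c)) :
  basis_matrix Ps -> basis_matrix H -> basis_matrix P -> basis_matrix Q ->
  P^T *m Ps = 0 ->
  kappa_of s Q <= kappa_of s P
    + kappa s ((1%:M - P *m P^T) *m Q) * opnorm ((1%:M - H *m H^T - Q *m Q^T) *m P)
    + opnorm ((1%:M - H *m H^T) *m Ps).
Proof.
move=> hPs hH hP hQ PPs.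
apply: le_trans (kappa_of_basis_split_le hP hQ) _; rewrite -addrA lerD2l.
apply: le_trans (ler_wpM2l (kappa_ge0 _ _) (opnorm_compl_new_le hPs hH hP hQ PPs)) _.
by rewrite mulrDr lerD2l -[X in _ <= X]mul1r ler_wpM2r ?opnorm_ge0 ?kappa_le1.
Qed.

End Perturbation.

Theorem lemma9 (R : realType) (n J K s : nat) (r c : 'I_J -> nat)
  (Pstar : forall j : 'I_J, 'M[R]_(n, r j))
  (Pnew : forall j : 'I_J, 'M[R]_(n, c j))
  (Phstar : forall j : 'I_J, 'M[R]_(n, r j))
  (Phnew : forall (j : 'I_J) (k : 'I_K), 'M[R]_(n, c j))
  (hPstar : forall j, basis_matrix (Pstar j))
  (hPnew : forall j, basis_matrix (Pnew j))
  (hPnew_orth : forall j, (Pnew j)^T *m Pstar j = 0)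
  (hPhstar : forall j, basis_matrix (Phstar j))
  (hPhnew : forall j k, basis_matrix (Phnew j k))
  (hPhnew_orth : forall j k, (Phnew j k)^T *m Phstar j = 0) :
  let kappa_star := \big[Num.max/0]_(j : 'I_J) kappa s (Pstar j) in
  let kappa_new := \big[Num.max/0]_(j : 'I_J) kappa s (Pnew j) in
  let kappa_tilde (k : 'I_K) := \big[Num.max/0]_(j : 'I_J)
        kappa s ((1%:M - Pnew j *m (Pnew j)^T) *m Phnew j k) in
  (* Claim 1 *)
  (forall (m a b : nat) (P1 : 'M[R]_(m, a)) (P2 : 'M[R]_(m, b)),
     basis_matrix (row_mx P1 P2) -> basis_matrix P1 -> basis_matrix P2 ->
     kappa s (row_mx P1 P2) ^+ 2
       = \big[Num.max/0]_(T : {set 'I_m} | (#|T| <= s)%N)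
           opnorm ((I_T R T)^T *m row_mx P1 P2) ^+ 2 /\
     kappa s (row_mx P1 P2) ^+ 2 <= kappa s P1 ^+ 2 + kappa s P2 ^+ 2) /\
  (forall (j : 'I_J) (k : 'I_K),
     let Ps := Pstar j in
     let Phs := Phstar j in
     let Pn := Pnew j in
     let Phn := Phnew j k in
     let zeta_star := opnorm ((1%:M - Phs *m Phs^T) *m Ps) in
     let zeta_k := opnorm ((1%:M - Phs *m Phs^T - Phn *m Phn^T) *m Pn) in
     let Phi0 := (1%:M - Phs *m Phs^T : 'M[R]_n) in
     let Phik := (1%:M - Phs *m Phs^T - Phn *m Phn^T : 'M[R]_n) in
     (* Claim 2 *)
     kappa s Phs ^+ 2 <= kappa_star ^+ 2 + 2 * zeta_star /\
     (* Claim 3 *)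
     kappa s Phn <= kappa_new + kappa_tilde k * zeta_k + zeta_star /\
     (* Claim 4 *)
     delta s Phi0 = kappa s Phs ^+ 2 /\
     kappa s Phs ^+ 2 <= kappa_star ^+ 2 + 2 * zeta_star /\
     (* Claim 5 *)
     delta s Phik = kappa s (row_mx Phs Phn) ^+ 2 /\
     kappa s (row_mx Phs Phn) ^+ 2 <= kappa s Phs ^+ 2 + kappa s Phn ^+ 2 /\
     kappa s Phs ^+ 2 + kappa s Phn ^+ 2
       <= kappa_star ^+ 2 + 2 * zeta_star
          + (kappa_new + kappa_tilde k * zeta_k + zeta_star) ^+ 2).
Proof.
move=> kappa_star kappa_new kappa_tilde; split.
  move=> m a b P1 P2 hP hP1 hP2.
  by split; [rewrite kappa_basis // sqr_kappa_of | exact: kappa_row_mx_le].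
move=> j k Ps Phs Pn Phn zeta_star zeta_k Phi0 Phik.
have zeta_k_ge0 : 0 <= zeta_k := opnorm_ge0 _.
have kappa_Ps_le : kappa s Ps <= kappa_star := le_bigmax _ (fun j => kappa s (Pstar j)) j.
have kappa_star_ge0 : 0 <= kappa_star := le_trans (kappa_ge0 s Ps) kappa_Ps_le.
have kappa_Pn_le : kappa s Pn <= kappa_new := le_bigmax _ (fun j => kappa s (Pnew j)) j.
have kappa_tilde_le : kappa s ((1%:M - Pn *m Pn^T) *m Phn) <= kappa_tilde k :=
  le_bigmax _ (fun j => kappa s ((1%:M - Pnew j *m (Pnew j)^T) *m Phnew j k)) j.
have claim2 : kappa s Phs ^+ 2 <= kappa_star ^+ 2 + 2 * zeta_star.
  rewrite (kappa_basis s (hPstar j)) in kappa_Ps_le; rewrite (kappa_basis s (hPhstar j)).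
  rewrite (le_trans (sqr_kappa_of_perturb_le s (hPstar j) (hPhstar j))) // lerD2r.
  by rewrite ler_sqr ?nnegrE ?kappa_of_ge0.
have claim3 : kappa s Phn <= kappa_new + kappa_tilde k * zeta_k + zeta_star.
  rewrite (kappa_basis s (hPnew j)) in kappa_Pn_le; rewrite (kappa_basis s (hPhnew j k)).
  apply: le_trans (kappa_of_new_perturb_le s (hPstar j) (hPhstar j) (hPnew j) (hPhnew j k)
                                            (hPnew_orth j)) _.
  by rewrite lerD2r lerD // ler_wpM2r.
have hW := basis_matrix_row_mx (hPhstar j) (hPhnew j k) (hPhnew_orth j k).
have PhikE : Phik = 1%:M - row_mx Phs Phn *m (row_mx Phs Phn)^T.
  by rewrite /Phik tr_row_mx mul_row_col opprD addrA.
do 6?split => //.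
- by rewrite /Phi0 (delta_compl_proj s (hPhstar j)) (kappa_basis s (hPhstar j)).
- by rewrite PhikE (delta_compl_proj s hW) (kappa_basis s hW).
- exact: kappa_row_mx_le hW (hPhstar j) (hPhnew j k).
- have := kappa_ge0 s Phn; nra.
Qed.
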